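(* The behaviour bifunctor $B^{\mathsf p}$ of \textbf{xPTCL} has a locally final coalgebra $z\colon Z\to B^{\mathsf p}(Z,Z)$, unique up to isomorphism. Moreover, there is a $\Sigma^{\mathsf p}$-algebra structure $a$ on $Z$ such that $(Z,a,z)$ is a $\rho^{\mathsf p}$-bialgebra, and it is adequate for strong probabilistic applicative bisimilarity: if $\llbracket-\rrbracket\colon\mu\Sigma^{\mathsf p}\to Z$ is the unique $\Sigma^{\mathsf p}$-algebra morphism, then for all $\tau$ and $p,q\in\mu\Sigma^{\mathsf p}_\tau$, $\llbracket p\rrbracket_\tau=\llbracket q\rrbracket_\tau$ implies $p\sim^{\mathsf p}_\tau q$.
   Context: Types: $\tau::=\mathsf{unit}\mid\tau\to\tau$. $\Sigma^{\mathsf p}$ is the $\mathsf{Ty}$-sorted signature containing, for all types, $\mathsf{e}\colon\mathsf{unit}$; application $\mathsf{app}_{\tau_1,\tau_2}\colon(\tau_1\to\tau_2)\times\tau_1\to\tau_2$ (written $s\,t$); constants $S_{\tau_1,\tau_2,\tau_3}\colon(\tau_1\to\tau_2\to\tau_3)\to(\tau_1\to\tau_2)\to\tau_1\to\tau_3$, $K_{\tau_1,\tau_2}\colon\tau_1\to\tau_2\to\tau_1$, $I_\tau\colon\tau\to\tau$; unary/binary $S'\colon(\tau_1\to\tau_2\to\tau_3)\to((\tau_1\to\tau_2)\to\tau_1\to\tau_3)$, $S''\colon(\tau_1\to\tau_2\to\tau_3)\times(\tau_1\to\tau_2)\to(\tau_1\to\tau_3)$, $K'\colon\tau_1\to(\tau_2\to\tau_1)$;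 and $\oplus_\tau\colon\tau\times\tau\to\tau$. $\mu\Sigma^{\mathsf p}$ is the sorted set of closed terms, $(\Sigma^{\mathsf p})^\star$ the free-term monad. $\mathcal{D}_\omega$ is the finite distribution functor on $\mathbf{Set}$. $B^{\mathsf p}\colon(\mathbf{Set}^{\mathsf{Ty}})^{op}\times\mathbf{Set}^{\mathsf{Ty}}\to\mathbf{Set}^{\mathsf{Ty}}$: $B^{\mathsf p}_{\mathsf{unit}}(X,Y)=\mathcal{D}_\omega(Y_{\mathsf{unit}})+1$, $B^{\mathsf p}_{\tau_1\to\tau_2}(X,Y)=\mathcal{D}_\omega(Y_{\tau_1\to\tau_2})+Y_{\tau_2}^{X_{\tau_1}}$. A higher-order coalgebra $c\colon C\to B^{\mathsf p}(C,C)$ is locally final if it is a final coalgebra for $B^{\mathsf p}(C,-)$. The higher-order GSOS law $\rho^{\mathsf p}_{X,Y}\colon\Sigma^{\mathsf p}(X\times B^{\mathsf p}(X,Y))\to B^{\mathsf p}(X,(\Sigma^{\mathsf p})^\star(X+Y))$ (injections, units implicit) is: $\mathsf{e}\mapsto *$; $S\mapsto\lambda t.S'(t)$; $S'(p,\_)\mapsto\lambda t.S''(p,t)$; $S''((p,\_),(q,\_))\mapsto\lambda t.(p\,t)(q\,t)$; $K\mapsto\lambda t.K'(t)$; $K'(p,\_)\mapsto\lambda t.p$; $I\mapsto\lambda t.t$; $(p,\_)\oplus_\tau(q,\_)\mapsto\tfrac12 p+\tfrac12 q$; $\mathsf{app}((p,\sum_ir_i\cdot p_i),(q,\_))\mapsto\sum_ir_i\cdot\mathsf{app}(p_i,q)$;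 $\mathsf{app}((p,f),(q,\_))\mapsto f(q)$ (as a Dirac distribution) for $f\in Y_{\tau_2}^{X_{\tau_1}}$. A $\rho^{\mathsf p}$-bialgebra is $(X,a,c)$ with $c\cdot a=B^{\mathsf p}(\mathrm{id},\hat a\cdot(\Sigma^{\mathsf p})^\star\nabla)\cdot\rho^{\mathsf p}_{X,X}\cdot\Sigma^{\mathsf p}\langle\mathrm{id},c\rangle$, $\hat a$ term evaluation. The operational model $\gamma^{\mathsf p}\colon\mu\Sigma^{\mathsf p}\to B^{\mathsf p}(\mu\Sigma^{\mathsf p},\mu\Sigma^{\mathsf p})$ is the unique map with $\gamma^{\mathsf p}\cdot\iota=B^{\mathsf p}(\mathrm{id},\hat\iota\cdot(\Sigma^{\mathsf p})^\star\nabla)\cdot\rho^{\mathsf p}\cdot\Sigma^{\mathsf p}\langle\mathrm{id},\gamma^{\mathsf p}\rangle$. Strong probabilistic applicative bisimilarity $\sim^{\mathsf p}$ is the greatest $\mathsf{Ty}$-indexed equivalence relation on $\mu\Sigma^{\mathsf p}$ such that whenever $p\sim^{\mathsf p}_\tau q$ one of: (i) $\gamma^{\mathsf p}(p),\gamma^{\mathsf p}(q)\in\mathcal{D}_\omega(\mu\Sigma^{\mathsf p}_\tau)$ and they assign equal total probability to every $\sim^{\mathsf p}_\tau$-equivalence class; (ii) $\tau=\mathsf{unit}$ and $\gamma^{\mathsf p}(p)=\gamma^{\mathsf p}(q)=*$; (iii) $\tau=\tau_1\to\tau_2$, both $\gamma^{\mathsf p}(p),\gamma^{\mathsf p}(q)$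 are functions $\mu\Sigma^{\mathsf p}_{\tau_1}\to\mu\Sigma^{\mathsf p}_{\tau_2}$ and $\gamma^{\mathsf p}(p)(t)\sim^{\mathsf p}_{\tau_2}\gamma^{\mathsf p}(q)(t)$ for all $t$. *)

From HB Require Import structures.
From mathcomp Require Import all_boot all_order all_algebra.
From mathcomp Require Import boolp classical_sets.
From mathcomp Require Import Rstruct.
From Stdlib Require Import Rdefinitions.

Set Implicit Arguments.
Unset Strict Implicit.
Unset Printing Implicit Defensive.
Import GRing.Theory Num.Theory.
Local Open Scope ring_scope.
Local Open Scope classical_set_scope.

Inductive ty : Type := tunit | tarr (t1 t2 : ty).

Definition sset := ty -> Type.
Definition smap (X Y : sset) := forall t : ty, X t -> Y t.
Definition sid (X : sset) : smap X X := fun _ x => x.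
Arguments sid X t x : clear implicits.
Definition scomp (X Y W : sset) (g : smap Y W) (f : smap X Y) : smap X W :=
  fun t x => g t (f t x).
Definition ssum (X Y : sset) : sset := fun t => (X t + Y t)%type.
Definition sprod (X Y : sset) : sset := fun t => (X t * Y t)%type.
Definition snabla (X : sset) : smap (ssum X X) X :=
  fun t s => match s with inl x => x | inr x => x end.

(* A finitely supported probability distribution on Y is represented by the
   (discrete, finitely supported) probability it assigns to every subset of Y,
   namely the one induced by some finite formal convex combination
   sum_i r_i . y_i (r_i >= 0, sum_i r_i = 1).                             *)
Definition fin_comb (Y : Type) (l : seq (Y * R)) (A : set Y) : R :=
  \sum_(p <- l) (if `[< A p.1 >] then p.2 else 0).

Definition is_fdist (Y : Type) (mu : set Y -> R) : Prop :=
  exists l : seq (Y * R),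
    [/\ all (fun p => 0 <= p.2) l, \sum_(p <- l) p.2 = 1
      & forall A, mu A = fin_comb l A].

Record fdist (Y : Type) : Type := FDist {
  fprob :> set Y -> R;
  fprobP : is_fdist fprob }.

Lemma fdist_map_proof (X Y : Type) (f : X -> Y) (d : fdist X) :
  is_fdist (fun A : set Y => d (f @^-1` A)).
Proof.
case: d => mu [l [l0 l1 lE]] /=.
exists (map (fun p => (f p.1, p.2)) l); split.
- by rewrite all_map.
- by rewrite big_map.
- by move=> A; rewrite lE /fin_comb big_map.
Qed.

Definition fdist_map (X Y : Type) (f : X -> Y) (d : fdist X) : fdist Y :=
  FDist (fdist_map_proof f d).

Lemma dirac_proof (Y : Type) (y : Y) : is_fdist (fin_comb [:: (y, 1)]).
Proof. exists [:: (y, 1)]; split => //=; first by rewrite ler01. by rewrite big_seq1. Qed.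

Definition fdirac (Y : Type) (y : Y) : fdist Y := FDist (dirac_proof y).

Lemma half_proof (Y : Type) (p q : Y) :
  is_fdist (fin_comb [:: (p, 2^-1); (q, 2^-1)]).
Proof.
exists [:: (p, 2^-1); (q, 2^-1)]; split => //=.
- by rewrite invr_ge0 ler0n.
- by rewrite !big_cons big_nil addr0 /= [RHS](splitr 1) mul1r.
Qed.

Definition fhalf (Y : Type) (p q : Y) : fdist Y := FDist (half_proof p q).

Definition tyS (t1 t2 t3 : ty) : ty :=
  tarr (tarr t1 (tarr t2 t3)) (tarr (tarr t1 t2) (tarr t1 t3)).

Inductive Sig (X : sset) : ty -> Type :=
| Se : Sig X tunit
| Sapp t1 t2 : X (tarr t1 t2) -> X t1 -> Sig X t2
| SS t1 t2 t3 : Sig X (tyS t1 t2 t3)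
| SK t1 t2 : Sig X (tarr t1 (tarr t2 t1))
| SI t : Sig X (tarr t t)
| SS1 t1 t2 t3 : X (tarr t1 (tarr t2 t3)) -> Sig X (tarr (tarr t1 t2) (tarr t1 t3))
| SS2 t1 t2 t3 : X (tarr t1 (tarr t2 t3)) -> X (tarr t1 t2) -> Sig X (tarr t1 t3)
| SK1 t1 t2 : X t1 -> Sig X (tarr t2 t1)
| Splus t : X t -> X t -> Sig X t.

Arguments Se {X}.
Arguments SS {X t1 t2 t3}.
Arguments SK {X t1 t2}.
Arguments SI {X t}.

Definition Sig_map (X Y : sset) (f : smap X Y) : smap (Sig X) (Sig Y) :=
  fun t s => match s in Sig _ t return Sig Y t with
  | Se => Se
  | Sapp _ _ p q => Sapp (f _ p) (f _ q)
  | SS _ _ _ => SS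
  | SK _ _ => SK
  | SI _ => SI
  | SS1 _ _ _ p => SS1 (f _ p)
  | SS2 _ _ _ p q => SS2 (f _ p) (f _ q)
  | SK1 _ t2 p => SK1 t2 (f _ p)
  | Splus _ p q => Splus (f _ p) (f _ q)
  end.

Definition alg (X : sset) := smap (Sig X) X.

Inductive Term (V : sset) : ty -> Type :=
| tvar t : V t -> Term V t
| te : Term V tunit
| tapp t1 t2 : Term V (tarr t1 t2) -> Term V t1 -> Term V t2
| tS t1 t2 t3 : Term V (tyS t1 t2 t3)
| tK t1 t2 : Term V (tarr t1 (tarr t2 t1))
| tI t : Term V (tarr t t)
| tS1 t1 t2 t3 : Term V (tarr t1 (tarr t2 t3)) -> Term V (tarr (tarr t1 t2) (tarr t1 t3))
| tS2 t1 t2 t3 : Term V (tarr t1 (tarr t2 t3)) -> Term V (tarr t1 t2) -> Term V (tarr t1 t3)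
| tK1 t1 t2 : Term V t1 -> Term V (tarr t2 t1)
| tplus t : Term V t -> Term V t -> Term V t.

Arguments te {V}.
Arguments tS {V t1 t2 t3}.
Arguments tK {V t1 t2}.
Arguments tI {V t}.

Definition term_op (V : sset) : alg (Term V) :=
  fun t s => match s in Sig _ t return Term V t with
  | Se => te
  | Sapp _ _ p q => tapp p q
  | SS _ _ _ => tS
  | SK _ _ => tK
  | SI _ => tI
  | SS1 _ _ _ p => tS1 p
  | SS2 _ _ _ p q => tS2 p q
  | SK1 _ t2 p => tK1 t2 p
  | Splus _ p q => tplus p q
  end.

Fixpoint Term_map (V W : sset) (f : smap V W) (t : ty) (e : Term V t) : Term W t :=
  match e in Term _ t return Term W t with
  | tvar _ v => tvar (f _ v)
  | te => te
  | tapp _ _ p q => tapp (Term_map f p) (Term_map f q)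
  | tS _ _ _ => tS
  | tK _ _ => tK
  | tI _ => tI
  | tS1 _ _ _ p => tS1 (Term_map f p)
  | tS2 _ _ _ p q => tS2 (Term_map f p) (Term_map f q)
  | tK1 _ t2 p => tK1 t2 (Term_map f p)
  | tplus _ p q => tplus (Term_map f p) (Term_map f q)
  end.

Fixpoint eval (X : sset) (a : alg X) (t : ty) (e : Term X t) : X t :=
  match e in Term _ t return X t with
  | tvar _ x => x
  | te => a _ Se
  | tapp _ _ p q => a _ (Sapp (eval a p) (eval a q))
  | tS _ _ _ => a _ SS
  | tK _ _ => a _ SK
  | tI _ => a _ SI
  | tS1 _ _ _ p => a _ (SS1 (eval a p))
  | tS2 _ _ _ p q => a _ (SS2 (eval a p) (eval a q))
  | tK1 _ t2 p => a _ (SK1 t2 (eval a p))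
  | tplus _ p q => a _ (Splus (eval a p) (eval a q))
  end.

Definition sempty : sset := fun _ => Empty_set.
Definition muS : sset := Term sempty.
Definition iota : alg muS := @term_op sempty.

Definition B (X Y : sset) (t : ty) : Type :=
  match t with
  | tunit => (fdist (Y tunit) + unit)%type
  | tarr t1 t2 => (fdist (Y (tarr t1 t2)) + (X t1 -> Y t2))%type
  end.

Definition Bmap (X X' Y Y' : sset) (f : smap X' X) (g : smap Y Y') :
    smap (B X Y) (B X' Y') :=
  fun t => match t return B X Y t -> B X' Y' t with
  | tunit => fun b => match b with
                      | inl d => inl (fdist_map (g tunit) d)
                      | inr u => inr u end
  | tarr t1 t2 => fun b => match b with
                      | inl d => inl (fdist_map (g (tarr t1 t2)) d)
                      | inr h => inr (fun x => g t2 (h (f t1 x))) end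
  end.

Definition Bdist (X Y : sset) (t : ty) : fdist (Y t) -> B X Y t :=
  match t return fdist (Y t) -> B X Y t with
  | tunit => fun d => inl d
  | tarr _ _ => fun d => inl d
  end.

Definition rho (X Y : sset) :
    smap (Sig (sprod X (B X Y))) (B X (Term (ssum X Y))) :=
  fun t s =>
  match s in Sig _ t return B X (Term (ssum X Y)) t with
  | Se => inr tt
  | SS _ _ _ => inr (fun x => tS1 (tvar (inl x) : Term (ssum X Y) _))
  | SS1 _ _ _ p => inr (fun x => tS2 (tvar (inl p.1) : Term (ssum X Y) _)
                                     (tvar (inl x)))
  | SS2 _ _ _ p q =>
      inr (fun x => tapp (tapp (tvar (inl p.1) : Term (ssum X Y) _) (tvar (inl x)))
                         (tapp (tvar (inl q.1)) (tvar (inl x))))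
  | SK _ _ => inr (fun x => tK1 _ (tvar (inl x) : Term (ssum X Y) _))
  | SK1 _ _ p => inr (fun _ => tvar (inl p.1) : Term (ssum X Y) _)
  | SI _ => inr (fun x => tvar (inl x) : Term (ssum X Y) _)
  | Splus t p q =>
      @Bdist X (Term (ssum X Y)) t
        (fhalf (tvar (inl p.1) : Term (ssum X Y) t) (tvar (inl q.1)))
  | Sapp t1 t2 p q =>
      match p.2 with
      | inl d =>
          @Bdist X (Term (ssum X Y)) t2
            (fdist_map (fun p' => tapp (tvar (inr p') : Term (ssum X Y) _)
                                       (tvar (inl q.1))) d)
      | inr f =>
          @Bdist X (Term (ssum X Y)) t2
            (fdirac (tvar (inr (f q.1)) : Term (ssum X Y) t2))
      end
  end.

Definition bialg_rhs (X : sset) (a : alg X) (c : smap X (B X X)) :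
    smap (Sig X) (B X X) :=
  fun t s =>
    Bmap (sid X) (fun t' e => eval a (Term_map (@snabla X) e))
      (rho (Sig_map (fun t' x => (x, c t' x) : sprod X (B X X) t') s)).

Definition is_bialgebra (X : sset) (a : alg X) (c : smap X (B X X)) : Prop :=
  forall t (s : Sig X t), c t (a t s) = bialg_rhs a c s.

(* The operational model gamma^p : mu Sigma^p -> B^p(mu Sigma^p, mu Sigma^p),
   defined by structural recursion: each clause is exactly the defining
   equation  gamma . iota = B(id, \hat iota . Sigma^* nabla) . rho . Sigma<id,gamma>
   instantiated at the corresponding operation.                        *)
Definition gpost : smap (B muS (Term (ssum muS muS))) (B muS muS) :=
  Bmap (sid muS) (fun t e => eval iota (Term_map (@snabla muS) e)).

Definition gpair (t : ty) (x : muS t) (b : B muS muS t) : sprod muS (B muS muS) t :=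
  (x, b).

Fixpoint gamma (t : ty) (e : muS t) {struct e} : B muS muS t :=
  match e in Term _ t return B muS muS t with
  | tvar _ v => match v with end
  | te => gpost (rho Se)
  | tapp _ _ p q => gpost (rho (Sapp (gpair p (gamma p)) (gpair q (gamma q))))
  | tS _ _ _ => gpost (rho SS)
  | tK _ _ => gpost (rho SK)
  | tI _ => gpost (rho SI)
  | tS1 _ _ _ p => gpost (rho (SS1 (gpair p (gamma p))))
  | tS2 _ _ _ p q => gpost (rho (SS2 (gpair p (gamma p)) (gpair q (gamma q))))
  | tK1 _ t2 p => gpost (rho (SK1 t2 (gpair p (gamma p))))
  | tplus _ p q => gpost (rho (Splus (gpair p (gamma p)) (gpair q (gamma q))))
  end.

Definition srel := forall t : ty, muS t -> muS t -> Prop.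

Definition is_equiv (T : Type) (r : T -> T -> Prop) : Prop :=
  [/\ forall x, r x x, forall x y, r x y -> r y x
    & forall x y z, r x y -> r y z -> r x z].

Definition is_class (T : Type) (r : T -> T -> Prop) (E : set T) : Prop :=
  exists x, E = [set y | r x y].

Definition bisim_step (Rl : srel) (t : ty) : muS t -> muS t -> Prop :=
  match t return muS t -> muS t -> Prop with
  | tunit => fun p q =>
      match gamma p, gamma q with
      | inl d1, inl d2 => forall E, is_class (Rl tunit) E -> d1 E = d2 E
      | inr tt, inr tt => True
      | _, _ => False
      end
  | tarr t1 t2 => fun p q =>
      match gamma p, gamma q with
      | inl d1, inl d2 => forall E, is_class (Rl (tarr t1 t2)) E -> d1 E = d2 E
      | inr f1, inr f2 => forall u : muS t1, Rl t2 (f1 u) (f2 u)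
      | _, _ => False
      end
  end.

Definition prob_app_bisim (Rl : srel) : Prop :=
  (forall t, is_equiv (Rl t)) /\
  (forall t p q, Rl t p q -> bisim_step Rl p q).

(* ~^p : the greatest such relation, i.e. the union of all of them *)
Definition pbisim (t : ty) (p q : muS t) : Prop :=
  exists Rl : srel, prob_app_bisim Rl /\ Rl t p q.

Definition locally_final (C : sset) (c : smap C (B C C)) : Prop :=
  forall (Y : sset) (g : smap Y (B C Y)),
    exists h : smap Y C,
      (forall t y, c t (h t y) = Bmap (sid C) h (g t y)) /\
      (forall h' : smap Y C,
         (forall t y, c t (h' t y) = Bmap (sid C) h' (g t y)) ->
         forall t y, h' t y = h t y).

Definition coalg_iso (C D : sset) (c : smap C (B C C)) (d : smap D (B D D)) : Prop :=
  exists (f : smap C D) (g : smap D C),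
    [/\ forall t x, g t (f t x) = x,
        forall t y, f t (g t y) = y
      & forall t x, d t (f t x) = Bmap g f (c t x)].

Definition alg_morph (X Y : sset) (a : alg X) (b : alg Y) (h : smap X Y) : Prop :=
  forall t (s : Sig X t), h t (a t s) = b t (Sig_map h s).

(* For a label set A, the functor X |-> D_omega(X) + A has a final coalgebra:
   finitely branching probabilistic trees with leaves in A, modulo
   bisimilarity. Taking A = 1 at unit and A = Z t1 -> Z t2 at t1 -> t2, by
   recursion on types, gives Z with z locally final. Conversely, a locally
   final coalgebra is final at every single sort (for the contravariant
   argument fixed), so an isomorphism between two of them is built by
   recursion on types, its component at t1 -> t2 using those at t1 and t2.
   The combinators act on Z through the inverse of z (Lambek); application is
   corecursive. Adequacy holds for every rho^p-bialgebra (X, a, c): the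
   algebra morphism h out of closed terms satisfies
   B(id, h) . gamma = B(h, id) . c . h, so the kernel of h is a strong
   probabilistic applicative bisimulation. *)

From mathcomp Require Import all_boot all_algebra.
From mathcomp Require Import boolp classical_sets.
From mathcomp Require Import Rstruct.
From Stdlib Require Import Rdefinitions.

Set Implicit Arguments.
Unset Strict Implicit.
Unset Printing Implicit Defensive.
Local Open Scope ring_scope.
Local Open Scope classical_set_scope.

Lemma fdist_ext (Y : Type) (d1 d2 : fdist Y) : fprob d1 = fprob d2 -> d1 = d2.
Proof.
by case: d1 d2 => f1 p1 [f2 p2] /= E; subst f2; congr FDist; apply: Prop_irrelevance.
Qed.

Lemma fdist_map_comp (X Y W : Type) (f : X -> Y) (g : Y -> W) (d : fdist X) :
  fdist_map g (fdist_map f d) = fdist_map (g \o f) d.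
Proof. exact: fdist_ext. Qed.

Lemma fdist_map_id (X : Type) (d : fdist X) : fdist_map id d = d.
Proof. by apply: fdist_ext; case: d. Qed.

Lemma fdist_map_dirac (X Y : Type) (f : X -> Y) (x : X) :
  fdist_map f (fdirac x) = fdirac (f x).
Proof. by apply: fdist_ext; apply: funext => A /=; rewrite /fin_comb !big_seq1. Qed.

Lemma fdist_map_half (X Y : Type) (f : X -> Y) (p q : X) :
  fdist_map f (fhalf p q) = fhalf (f p) (f q).
Proof. by apply: fdist_ext; apply: funext => A /=; rewrite /fin_comb !big_cons !big_nil. Qed.

Definition fdist_seq (X : Type) (d : fdist X) : seq (X * R) := proj1_sig (cid (fprobP d)).

Lemma fdist_seqP (X : Type) (d : fdist X) :
  [/\ all (fun p => 0 <= p.2) (fdist_seq d), \sum_(p <- fdist_seq d) p.2 = 1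
    & forall B, d B = fin_comb (fdist_seq d) B].
Proof. by rewrite /fdist_seq; case: (cid _). Qed.

(** * The final coalgebra of D_omega(-) + A *)

Section FinalCoalgebra.
Variable A : Type.

Definition Dplus (X : Type) : Type := (fdist X + A)%type.

Definition Dplus_map (X Y : Type) (f : X -> Y) (b : Dplus X) : Dplus Y :=
  match b with inl d => inl (fdist_map f d) | inr a => inr a end.

Lemma Dplus_map_comp (X Y W : Type) (f : X -> Y) (g : Y -> W) (b : Dplus X) :
  Dplus_map g (Dplus_map f b) = Dplus_map (g \o f) b.
Proof. by case: b => //= d; rewrite fdist_map_comp. Qed.

Lemma Dplus_map_id (X : Type) (b : Dplus X) : Dplus_map id b = b.
Proof. by case: b => //= d; rewrite fdist_map_id. Qed.

Definition is_weights (n : nat) (w : nat -> R) : Prop :=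
  (forall i, (i < n)%nat -> 0 <= w i) /\ \sum_(i < n) w i = 1.

(* A node carries the finite convex combination [sum_(i < n) w i . k i]. *)
CoInductive ptree : Type :=
| Leaf (a : A)
| Node (n : nat) (k : nat -> ptree) (w : nat -> R) of is_weights n w.

Definition ptree_frob (t : ptree) : ptree :=
  match t with Leaf a => Leaf a | Node _ k _ H => Node k H end.

Lemma ptree_frobE (t : ptree) : t = ptree_frob t.
Proof. by case: t. Qed.

Definition node_comb (n : nat) (k : nat -> ptree) (w : nat -> R) : seq (ptree * R) :=
  [seq (k i, w i) | i <- seq.iota 0 n].

Lemma node_dist_proof n k w : is_weights n w -> is_fdist (fin_comb (node_comb n k w)).
Proof.
move=> [w_ge0 w_sum1]; exists (node_comb n k w); split => //.
  by rewrite all_map; apply/allP => i; rewrite mem_iota add0n => /andP [_ /w_ge0].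
by rewrite big_map /= -w_sum1 -(big_mkord xpredT w) /index_iota subn0.
Qed.

Definition node_dist n k w (H : is_weights n w) : fdist ptree :=
  FDist (node_dist_proof k H).

Lemma node_comb_nth (X : Type) (f : X -> ptree) (l : seq (X * R)) (x0 : X * R) :
  node_comb (size l) (fun i => f (nth x0 l i).1) (fun i => (nth x0 l i).2)
  = [seq (f p.1, p.2) | p <- l].
Proof.
rewrite /node_comb -[in RHS](mkseq_nth x0 l) /mkseq -map_comp.
by apply: eq_map.
Qed.

Definition tree_step (E : ptree -> ptree -> Prop) (x y : ptree) : Prop :=
  match x, y with
  | Leaf a, Leaf b => a = b
  | Node n k w _, Node n' k' w' _ =>
      forall C : set ptree, (forall u v, E u v -> C u -> C v) ->
        fin_comb (node_comb n k w) C = fin_comb (node_comb n' k' w') C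
  | _, _ => False
  end.

Lemma tree_step_refl E x : tree_step E x x.
Proof. by case: x. Qed.

Lemma tree_step_sym E x y : tree_step E x y -> tree_step E y x.
Proof. by case: x; case: y => //= *; symmetry; auto. Qed.

Lemma tree_step_trans E x y u : tree_step E x y -> tree_step E y u -> tree_step E x u.
Proof.
case: x => [a|n k w H]; case: y => [b|n' k' w' H']; case: u => [c|n'' k'' w'' H''] //=.
  by move=> -> ->.
by move=> Exy Eyu C CE; rewrite Exy ?Eyu.
Qed.

Lemma tree_step_mono (E E' : ptree -> ptree -> Prop) x y :
  (forall u v, E u v -> E' u v) -> tree_step E x y -> tree_step E' x y.
Proof.
move=> EE'; case: x; case: y => //= ? ? ? ? ? ? ? ? Exy C CE'; apply: Exy.
by move=> u v /EE'; apply: CE'.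
Qed.

Inductive equiv_closure (G : ptree -> ptree -> Prop) : ptree -> ptree -> Prop :=
| ec_base x y : G x y -> equiv_closure G x y
| ec_refl x : equiv_closure G x x
| ec_sym x y : equiv_closure G x y -> equiv_closure G y x
| ec_trans x y u : equiv_closure G x y -> equiv_closure G y u -> equiv_closure G x u.

Lemma equiv_closure_step G :
  (forall x y, G x y -> tree_step (equiv_closure G) x y) ->
  forall x y, equiv_closure G x y -> tree_step (equiv_closure G) x y.
Proof.
move=> GS x y; elim => {x y}.
- exact: GS.
- by move=> *; apply: tree_step_refl.
- by move=> *; apply: tree_step_sym.
- by move=> *; apply: tree_step_trans; eauto.
Qed.

Definition tree_bisim (x y : ptree) : Prop :=
  exists E, (forall u v, E u v -> tree_step E u v) /\ E x y.

Lemma tree_bisim_coind G x y :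
  (forall u v, G u v -> tree_step (equiv_closure G) u v) -> G x y -> tree_bisim x y.
Proof.
move=> GS Gxy; exists (equiv_closure G); split; last exact: ec_base.
exact: equiv_closure_step.
Qed.

Lemma tree_bisim_step x y : tree_bisim x y -> tree_step tree_bisim x y.
Proof.
case=> E [ES Exy]; apply: tree_step_mono (ES _ _ Exy) => u v Euv.
by exists E.
Qed.

Lemma tree_bisim_refl x : tree_bisim x x.
Proof. by exists eq; split => // u v <-; apply: tree_step_refl. Qed.

Lemma tree_bisim_sym x y : tree_bisim x y -> tree_bisim y x.
Proof.
case=> E [ES Exy]; apply: (@tree_bisim_coind (fun u v => E v u)) => // u v Evu.
apply: tree_step_sym; apply: tree_step_mono (ES _ _ Evu) => a b Eab.
by apply: ec_sym; apply: ec_base.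
Qed.

Lemma tree_bisim_trans x y u : tree_bisim x y -> tree_bisim y u -> tree_bisim x u.
Proof.
case=> E1 [ES1 E1xy] [E2 [ES2 E2yu]].
pose G a b := equiv_closure (fun a b => E1 a b \/ E2 a b) a b.
apply: (@tree_bisim_coind G); last by apply: (@ec_trans _ _ y); apply: ec_base; auto.
have GS c d : E1 c d \/ E2 c d -> tree_step G c d.
  by case=> [/ES1|/ES2]; apply: tree_step_mono => ? ? ?; apply: ec_base; auto.
by move=> a b Gab; apply: tree_step_mono (equiv_closure_step GS Gab) => ? ? ?; apply: ec_base.
Qed.

Definition ptree_quot : Type := {P : ptree -> Prop | exists t, P = tree_bisim t}.

Definition cls (t : ptree) : ptree_quot := exist _ (tree_bisim t) (ex_intro _ t erefl).

Lemma cls_eq x y : tree_bisim x y -> cls x = cls y.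
Proof.
move=> xy; apply: eq_exist; apply: funext => u; apply: propext; split.
  by apply: tree_bisim_trans; apply: tree_bisim_sym.
exact: tree_bisim_trans.
Qed.

Lemma cls_inj x y : cls x = cls y -> tree_bisim x y.
Proof. by move=> /(congr1 (@proj1_sig _ _)) /= ->; apply: tree_bisim_refl. Qed.

Definition repr_tree (c : ptree_quot) : ptree := proj1_sig (cid (proj2_sig c)).

Lemma repr_treeK (c : ptree_quot) : cls (repr_tree c) = c.
Proof. by case: c => P HP; rewrite /repr_tree /=; apply: eq_exist; case: (cid HP). Qed.

Lemma cls_saturated (C : set ptree) :
  (forall u v, tree_bisim u v -> C u -> C v) -> cls @^-1` (cls @` C) = C.
Proof.
move=> CB; apply: funext => t; apply: propext; split; last by exists t.
by case=> u Cu /cls_inj ut; apply: CB ut Cu.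
Qed.

Definition obs (t : ptree) : Dplus ptree_quot :=
  match t with Leaf a => inr a | Node _ k _ H => inl (fdist_map cls (node_dist k H)) end.

Definition out (c : ptree_quot) : Dplus ptree_quot := obs (repr_tree c).

Lemma obs_bisim x y : tree_bisim x y -> obs x = obs y.
Proof.
move/tree_bisim_step; case: x; case: y => //=; first by move=> ? ? ->.
move=> ? ? ? ? ? ? ? ? xy; congr inl; apply: fdist_ext; apply: funext => B /=.
by apply: xy => u v /cls_eq uv; rewrite /preimage /= uv.
Qed.

Lemma out_cls t : out (cls t) = obs t.
Proof. by apply: obs_bisim; apply: cls_inj; rewrite repr_treeK. Qed.

Section Unfold.
Variables (X : Type) (g : X -> Dplus X).

Lemma fdist_seq_weights (d : fdist X) (x0 : X) :
  is_weights (size (fdist_seq d)) (fun i => (nth (x0, 0) (fdist_seq d) i).2).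
Proof.
have [w_ge0 w_sum1 _] := fdist_seqP d; split.
  by move=> i Hi; move/all_nthP: w_ge0; apply.
by rewrite -w_sum1 (big_nth (x0, 0)) big_mkord.
Qed.

CoFixpoint unfold_tree (x : X) : ptree :=
  match g x with
  | inr a => Leaf a
  | inl d => Node (fun i => unfold_tree (nth (x, 0) (fdist_seq d) i).1) (fdist_seq_weights d x)
  end.

Definition unfold (x : X) : ptree_quot := cls (unfold_tree x).

Lemma fin_comb_unfold_tree (d : fdist X) (x0 : X) (C : set ptree) :
  fin_comb (node_comb (size (fdist_seq d))
     (fun i => unfold_tree (nth (x0, 0) (fdist_seq d) i).1)
     (fun i => (nth (x0, 0) (fdist_seq d) i).2)) C = d (unfold_tree @^-1` C).
Proof. by have [_ _ ->] := fdist_seqP d; rewrite node_comb_nth /fin_comb big_map. Qed.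

Lemma unfoldE x : out (unfold x) = Dplus_map unfold (g x).
Proof.
rewrite /unfold out_cls [unfold_tree x]ptree_frobE /=.
case: (g x) => [d|a] //=; congr inl; apply: fdist_ext; apply: funext => B /=.
by rewrite fin_comb_unfold_tree.
Qed.

(* Pairing [unfold_tree x] with [repr_tree (m x)] and closing under equivalence
   gives a bisimulation. *)
Lemma unfold_unique (m : X -> ptree_quot) :
  (forall x, out (m x) = Dplus_map m (g x)) -> forall x, m x = unfold x.
Proof.
move=> mE x.
pose G a b := tree_bisim a b \/ exists x, a = unfold_tree x /\ b = repr_tree (m x).
suff : tree_bisim (unfold_tree x) (repr_tree (m x)).
  by move/cls_eq; rewrite repr_treeK /unfold => ->.
apply: (@tree_bisim_coind G); last by right; exists x.
move=> a b [ab|[y [-> ->]]].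
  by apply: tree_step_mono (tree_bisim_step ab) => ? ? ?; apply: ec_base; left.
have := mE y; rewrite /out [unfold_tree y]ptree_frobE /=.
case: (g y) => [d|a0]; case: (repr_tree (m y)) => [a1|n k w H] //=; last by case=> ->.
case=> dE C CG; rewrite fin_comb_unfold_tree.
have CB : forall u v, tree_bisim u v -> C u -> C v.
  by move=> u v uv; apply: CG; apply: ec_base; left.
have -> : unfold_tree @^-1` C = m @^-1` (cls @` C).
  apply: funext => u; rewrite /preimage /= -[m u]repr_treeK.
  transitivity (C (repr_tree (m u))); last exact: esym (congr1 (fun P => P _) (cls_saturated CB)).
  by apply: propext; split; apply: CG; [|apply: ec_sym]; apply: ec_base; right; exists u.
have := congr1 (fun P => P (cls @` C)) dE => /= <-.
by rewrite -[in RHS](cls_saturated CB).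
Qed.

End Unfold.

Lemma out_endo_id (m : ptree_quot -> ptree_quot) :
  (forall c, out (m c) = Dplus_map m (out c)) -> forall c, m c = c.
Proof.
move=> mE c; rewrite (unfold_unique mE).
by rewrite -(@unfold_unique _ out id) // => c'; rewrite Dplus_map_id.
Qed.

Definition out_inv (b : Dplus ptree_quot) : ptree_quot := unfold (Dplus_map out) b.

Lemma out_invK (b : Dplus ptree_quot) : out (out_inv b) = b.
Proof.
have outK : cancel out out_inv.
  by apply: out_endo_id => c; rewrite unfoldE Dplus_map_comp.
rewrite unfoldE Dplus_map_comp -[RHS]Dplus_map_id; congr Dplus_map.
exact: funext outK.
Qed.

End FinalCoalgebra.

Definition Dplus_relabel (A A' X : Type) (r : A -> A') (b : Dplus A X) : Dplus A' X :=
  match b with inl d => inl d | inr a => inr (r a) end.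

Lemma Dplus_relabel_map (A A' X Y : Type) (r : A -> A') (f : X -> Y) (b : Dplus A X) :
  Dplus_relabel r (Dplus_map f b) = Dplus_map f (Dplus_relabel r b).
Proof. by case: b. Qed.

Lemma Dplus_relabel_comp (A A' A'' X : Type) (r : A -> A') (r' : A' -> A'') (b : Dplus A X) :
  Dplus_relabel r' (Dplus_relabel r b) = Dplus_relabel (r' \o r) b.
Proof. by case: b. Qed.

Lemma Dplus_relabel_id (A X : Type) (b : Dplus A X) : Dplus_relabel id b = b.
Proof. by case: b. Qed.

(** * The locally final coalgebra Z *)

Lemma Bmap_comp (X Y1 Y2 Y3 : sset) (g1 : smap Y1 Y2) (g2 : smap Y2 Y3) t (b : B X Y1 t) :
  Bmap (sid X) g2 (Bmap (sid X) g1 b) = Bmap (sid X) (scomp g2 g1) b.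
Proof. by case: t b => [|t1 t2] [d|f] //=; rewrite fdist_map_comp. Qed.

Lemma Bmap_id (X Y : sset) t (b : B X Y t) : Bmap (sid X) (sid Y) b = b.
Proof. by case: t b => [|t1 t2] [d|f] //=; rewrite fdist_map_id. Qed.

Lemma Bmap_Bdist (X X' Y Y' : sset) (f : smap X' X) (g : smap Y Y') t d :
  Bmap f g (@Bdist X Y t d) = @Bdist X' Y' t (fdist_map (g t) d).
Proof. by case: t d. Qed.

Definition Bobs (C : sset) (s : ty) : Type :=
  match s with tunit => unit | tarr t1 t2 => C t1 -> C t2 end.

Definition B_Dplus (C : sset) (s : ty) : B C C s -> Dplus (Bobs C s) (C s) :=
  match s return B C C s -> Dplus (Bobs C s) (C s) with
  tunit => id | tarr _ _ => id end.

Definition Dplus_B (C : sset) (s : ty) : Dplus (Bobs C s) (C s) -> B C C s :=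
  match s return Dplus (Bobs C s) (C s) -> B C C s with tunit => id | tarr _ _ => id end.

Lemma B_DplusK (C : sset) (s : ty) : cancel (@B_Dplus C s) (@Dplus_B C s).
Proof. by case: s. Qed.

Fixpoint Zobs (t : ty) : Type :=
  match t with tunit => unit | tarr t1 t2 => ptree_quot (Zobs t1) -> ptree_quot (Zobs t2) end.

Definition Z : sset := fun t => ptree_quot (Zobs t).

Definition z : smap Z (B Z Z) := fun t =>
  match t return Z t -> B Z Z t with tunit => @out unit | tarr t1 t2 => @out (Zobs (tarr t1 t2)) end.

Fixpoint z_unfold (Y : sset) (g : smap Y (B Z Y)) (t : ty) : Y t -> Z t :=
  match t return Y t -> Z t with
  | tunit => unfold (g tunit)
  | tarr t1 t2 => unfold (Dplus_relabel (fun f => @z_unfold _ g t2 \o f) \o g (tarr t1 t2))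
  end.

Lemma z_locally_final : locally_final z.
Proof.
move=> Y g; exists (z_unfold g); split.
  by case=> [|t1 t2] y /=; rewrite unfoldE /=; case: (g _ y).
move=> h hE; elim=> [|t1 _ t2 IH2] y /=; apply: unfold_unique => x; move: (hE _ x) => /= ->.
  by case: (g _ x).
by case: (g _ x) => //= f; congr inr; apply: funext => u; apply: IH2.
Qed.

(** * Uniqueness of locally final coalgebras *)

Section SortwiseFinality.
Variables (C : sset) (c : smap C (B C C)).
Hypothesis c_lf : locally_final c.

Definition csort (s : ty) (x : C s) : Dplus (Bobs C s) (C s) := B_Dplus (c x).

Lemma locally_final_endo_id (h : smap C C) :
  (forall t x, c (h t x) = Bmap (sid C) h (c x)) -> forall t x, h t x = x.
Proof.
move=> hE t x; have [h0 [_ h0_uniq]] := c_lf c.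
by rewrite (h0_uniq h hE) -(h0_uniq (sid C)) // => t' y; rewrite Bmap_id.
Qed.

(* [C] with a copy of [X] added at sort [s]: a single-sort coalgebra on [X]
   becomes a sorted one, to which local finality applies. *)
Definition Cplus (s : ty) (X : Type) : sset := fun t => (C t + {_ : t = s & X})%type.

Definition Cplus_in {s : ty} {X : Type} (x : X) : Cplus s X s := inr (existT _ erefl x).

Definition Cplus_embed (s : ty) (X : Type) : Dplus (Bobs C s) X -> B C (Cplus s X) s :=
  match s with
  | tunit => fun b => match b with
      | inl d => inl (fdist_map (@Cplus_in tunit X) d) | inr u => inr u end
  | tarr t1 t2 => fun b => match b with
      | inl d => inl (fdist_map (@Cplus_in (tarr t1 t2) X) d)
      | inr f => inr (fun u => inl (f u)) end
  end.

Definition Cplus_coalg (s : ty) (X : Type) (k : X -> Dplus (Bobs C s) X) :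
    smap (Cplus s X) (B C (Cplus s X)) := fun t y =>
  match y with
  | inl x => Bmap (sid C) (fun _ => inl) (c x)
  | inr (existT e x) => eq_rect_r (B C (Cplus s X)) (Cplus_embed (k x)) e
  end.

Lemma B_Dplus_Bmap_embed s X (g : smap (Cplus s X) C) (b : Dplus (Bobs C s) X) :
  (forall t x, g t (inl x) = x) ->
  B_Dplus (Bmap (sid C) g (Cplus_embed b)) = Dplus_map (fun x => g s (Cplus_in x)) b.
Proof.
case: s g b => [|t1 t2] g [d|f] g_inl //=; rewrite ?fdist_map_comp //.
by congr inr; apply: funext => u; rewrite g_inl.
Qed.

Lemma sort_final (s : ty) (X : Type) (k : X -> Dplus (Bobs C s) X) :
  exists m : X -> C s,
    (forall x, csort (m x) = Dplus_map m (k x)) /\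
    (forall m', (forall x, csort (m' x) = Dplus_map m' (k x)) -> forall x, m' x = m x).
Proof.
have [h [hE h_uniq]] := c_lf (Cplus_coalg k).
have h_inl t x : h t (inl x) = x.
  by apply: (locally_final_endo_id (h := fun t x => h t (inl x))) => t' x'; rewrite hE Bmap_comp.
exists (fun x => h s (Cplus_in x)); split.
  by move=> x; rewrite /csort hE B_Dplus_Bmap_embed.
move=> m' m'E x.
pose h' : smap (Cplus s X) C := fun t y =>
  match y with inl x => x | inr (existT e x) => eq_rect_r C (m' x) e end.
apply: (h_uniq h' _ s (Cplus_in x)) => t [x'|[e x']] /=.
  by rewrite Bmap_comp Bmap_id.
subst t; apply: (can_inj (@B_DplusK C s)).
by rewrite B_Dplus_Bmap_embed //; apply: m'E.
Qed.

Definition sort_unfold (s : ty) (X : Type) (k : X -> Dplus (Bobs C s) X) : X -> C s :=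
  proj1_sig (cid (sort_final k)).

Lemma sort_unfoldE s X (k : X -> Dplus (Bobs C s) X) x :
  csort (sort_unfold k x) = Dplus_map (sort_unfold k) (k x).
Proof. exact: (proj1 (proj2_sig (cid (sort_final k))) x). Qed.

Lemma sort_unfold_unique s X (k : X -> Dplus (Bobs C s) X) (m : X -> C s) :
  (forall x, csort (m x) = Dplus_map m (k x)) -> forall x, m x = sort_unfold k x.
Proof. exact: (proj2 (proj2_sig (cid (sort_final k))) m). Qed.

Lemma sort_endo_id s (m : C s -> C s) :
  (forall x, csort (m x) = Dplus_map m (csort x)) -> forall x, m x = x.
Proof.
move=> mE x; rewrite (sort_unfold_unique mE).
by rewrite -(@sort_unfold_unique _ _ _ id) // => x'; rewrite Dplus_map_id.
Qed.

End SortwiseFinality.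

Section SortUnfoldCancel.
Variables (C D : sset) (c : smap C (B C C)) (d : smap D (B D D)).
Hypotheses (c_lf : locally_final c) (d_lf : locally_final d).

Lemma sort_unfold_cancel s (rc : Bobs C s -> Bobs D s) (rd : Bobs D s -> Bobs C s) :
  cancel rc rd ->
  cancel (sort_unfold d_lf (fun x => Dplus_relabel rc (csort c x)))
         (sort_unfold c_lf (fun y => Dplus_relabel rd (csort d y))).
Proof.
move=> rcK; apply: (sort_endo_id c_lf) => x.
rewrite sort_unfoldE sort_unfoldE Dplus_relabel_map Dplus_map_comp Dplus_relabel_comp.
by rewrite (_ : rd \o rc = id) ?Dplus_relabel_id //; apply: funext.
Qed.

End SortUnfoldCancel.

Section Uniqueness.
Variables (C D : sset) (c : smap C (B C C)) (d : smap D (B D D)).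
Hypotheses (c_lf : locally_final c) (d_lf : locally_final d).

(* The action of the isomorphism on the function parts at sort [t] only
   involves the isomorphisms at the smaller sorts, which makes the recursion work. *)
Fixpoint iso_obs (t : ty) : (Bobs C t -> Bobs D t) * (Bobs D t -> Bobs C t) :=
  match t return (Bobs C t -> Bobs D t) * (Bobs D t -> Bobs C t) with
  | tunit => (id, id)
  | tarr t1 t2 =>
    (fun f => sort_unfold d_lf (fun x => Dplus_relabel (iso_obs t2).1 (csort c x)) \o f
              \o sort_unfold c_lf (fun y => Dplus_relabel (iso_obs t1).2 (csort d y)),
     fun g => sort_unfold c_lf (fun y => Dplus_relabel (iso_obs t2).2 (csort d y)) \o g
              \o sort_unfold d_lf (fun x => Dplus_relabel (iso_obs t1).1 (csort c x)))
  end.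

Definition iso_to (t : ty) : C t -> D t :=
  sort_unfold d_lf (fun x => Dplus_relabel (iso_obs t).1 (csort c x)).

Definition iso_from (t : ty) : D t -> C t :=
  sort_unfold c_lf (fun y => Dplus_relabel (iso_obs t).2 (csort d y)).

Lemma iso_obs_cancel t :
  cancel (iso_obs t).1 (iso_obs t).2 /\ cancel (iso_obs t).2 (iso_obs t).1.
Proof.
elim: t => [|t1 [K1 K1'] t2 [K2 K2']] //.
have toK1 : cancel (@iso_to t1) (@iso_from t1) := sort_unfold_cancel c_lf d_lf K1.
have fromK1 : cancel (@iso_from t1) (@iso_to t1) := sort_unfold_cancel d_lf c_lf K1'.
have toK2 : cancel (@iso_to t2) (@iso_from t2) := sort_unfold_cancel c_lf d_lf K2.
have fromK2 : cancel (@iso_from t2) (@iso_to t2) := sort_unfold_cancel d_lf c_lf K2'.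
split=> f; apply: funext => u.
  exact: etrans (toK2 _) (congr1 f (toK1 u)).
exact: etrans (fromK2 _) (congr1 f (fromK1 u)).
Qed.

Lemma locally_final_iso : coalg_iso c d.
Proof.
exists iso_to, iso_from; split => t x.
- by apply: sort_unfold_cancel; case: (iso_obs_cancel t).
- by apply: sort_unfold_cancel; case: (iso_obs_cancel t).
have := sort_unfoldE d_lf (fun x => Dplus_relabel (iso_obs t).1 (csort c x)) x.
by rewrite /csort; case: t x => [|t1 t2] x /=; case: (c x) => //= ? ->.
Qed.

End Uniqueness.

(** * The bialgebra structure on Z *)

Definition Z_of_Dplus (t : ty) : Dplus (Zobs t) (Z t) -> B Z Z t :=
  match t return Dplus (Zobs t) (Z t) -> B Z Z t with tunit => id | tarr _ _ => id end.

Lemma zE t (x : Z t) : z x = Z_of_Dplus (out x).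
Proof. by case: t x. Qed.

Lemma Z_of_Dplus_inl t (d : fdist (Z t)) : Z_of_Dplus (inl d) = @Bdist Z Z t d.
Proof. by case: t d. Qed.

Definition zinv (t : ty) : B Z Z t -> Z t :=
  match t return B Z Z t -> Z t with
  | tunit => @out_inv unit
  | tarr t1 t2 => @out_inv (Zobs (tarr t1 t2))
  end.

Lemma zinvK t (b : B Z Z t) : z (zinv b) = b.
Proof. by case: t b => [|t1 t2] b; apply: out_invK. Qed.

Section Application.
Variables t1 t2 : ty.

(* State [inr (p, q)] stands for [p q] and [inl x] behaves as [x]: while [p]
   is a distribution, [p q] is its image; once [p] is a function [f], [p q]
   moves to [f q] with probability 1. *)
Definition app_state : Type := (Z t2 + Z (tarr t1 t2) * Z t1)%type.

Definition app_step (y : app_state) : Dplus (Zobs t2) app_state :=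
  match y with
  | inl x => Dplus_map inl (out x)
  | inr (p, q) => inl
      match out p with
      | inl d => fdist_map (fun p' => inr (p', q)) d
      | inr f => fdirac (inl (f q))
      end
  end.

Definition Zapp (p : Z (tarr t1 t2)) (q : Z t1) : Z t2 := unfold app_step (inr (p, q)).

Lemma unfold_app_step_inl (x : Z t2) : unfold app_step (inl x) = x.
Proof.
by apply: (out_endo_id (m := fun x => unfold app_step (inl x))) => {}x; rewrite unfoldE Dplus_map_comp.
Qed.

Lemma z_Zapp p q : z (Zapp p q) =
  @Bdist Z Z t2 match z p with
    | inl d => fdist_map (Zapp^~ q) d
    | inr f => fdirac (f q)
    end.
Proof.
rewrite zE /Zapp unfoldE /= -Z_of_Dplus_inl; congr Z_of_Dplus.
case: (out p) => [d|f] /=; congr inl; first by rewrite fdist_map_comp.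
by rewrite fdist_map_dirac unfold_app_step_inl.
Qed.

End Application.

Definition ZS2 t1 t2 t3 (p : Z (tarr t1 (tarr t2 t3))) (q : Z (tarr t1 t2)) : Z (tarr t1 t3) :=
  zinv (t:=tarr t1 t3) (inr (fun x => Zapp (Zapp p x) (Zapp q x))).

Definition ZS1 t1 t2 t3 (p : Z (tarr t1 (tarr t2 t3))) : Z (tarr (tarr t1 t2) (tarr t1 t3)) :=
  zinv (t:=tarr (tarr t1 t2) (tarr t1 t3)) (inr (ZS2 p)).

Definition ZS t1 t2 t3 : Z (tyS t1 t2 t3) := zinv (t:=tyS t1 t2 t3) (inr (@ZS1 t1 t2 t3)).

Definition ZK1 t1 t2 (p : Z t1) : Z (tarr t2 t1) := zinv (t:=tarr t2 t1) (inr (fun _ => p)).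

Definition ZK t1 t2 : Z (tarr t1 (tarr t2 t1)) := zinv (t:=tarr t1 (tarr t2 t1)) (inr (ZK1 t2)).

Definition ZI t : Z (tarr t t) := zinv (t:=tarr t t) (inr id).

Definition Ze : Z tunit := zinv (t:=tunit) (inr tt).

Definition Zplus t (p q : Z t) : Z t := zinv (@Bdist Z Z t (fhalf p q)).

Definition Zalg : alg Z := fun t s =>
  match s in Sig _ t return Z t with
  | Se => Ze
  | Sapp _ _ p q => Zapp p q
  | SS t1 t2 t3 => ZS t1 t2 t3
  | SK t1 t2 => ZK t1 t2
  | SI t => ZI t
  | SS1 _ _ _ p => ZS1 p
  | SS2 _ _ _ p q => ZS2 p q
  | SK1 _ t2 p => ZK1 t2 p
  | Splus _ p q => Zplus p q
  end.

Lemma Zalg_bialgebra : is_bialgebra Zalg z.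
Proof.
move=> t [|t1 t2 p q|t1 t2 t3|t1 t2|t0|t1 t2 t3 p|t1 t2 t3 p q|t1 t2 p|t0 p q];
  rewrite ?zinvK //.
- rewrite z_Zapp /bialg_rhs /=.
  by case: (out p) => [d|f]; rewrite Bmap_Bdist ?fdist_map_comp ?fdist_map_dirac.
- by rewrite /bialg_rhs /= Bmap_Bdist fdist_map_half.
Qed.

(** * Adequacy of bialgebras *)

Section Adequacy.
Variables (X : sset) (a : alg X) (c : smap X (B X X)).
Hypothesis ac_bialg : is_bialgebra a c.
Variable h : smap muS X.
Hypothesis h_morph : alg_morph iota a h.

Lemma Bmap_gamma t (p : muS t) : Bmap (sid muS) h (gamma p) = Bmap h (sid X) (c (h p)).
Proof.
elim: p => [t0 []| |t1 t2 p IHp q _|t1 t2 t3|t1 t2|t0|t1 t2 t3 p _|t1 t2 t3 p _ q _|t1 t2 p _|t0 p _ q _].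
- by rewrite (h_morph Se) ac_bialg.
- rewrite (h_morph (Sapp p q)) ac_bialg /bialg_rhs /= /gpost.
  move: IHp; case: (gamma p) => [d|f]; case: (c (h p)) => [d'|g] // [E].
    have {}E := @fdist_ext _ (fdist_map (@h _) d) d' E; subst d'.
    rewrite !Bmap_Bdist !fdist_map_comp; do 2 f_equal.
    by apply: funext => p'; apply: (h_morph (Sapp p' q)).
  by rewrite !Bmap_Bdist !fdist_map_dirac /= (congr1 (fun k => k q) E).
- rewrite (h_morph SS) ac_bialg /=; congr inr; apply: funext => u.
  exact: (h_morph (SS1 u)).
- rewrite (h_morph SK) ac_bialg /=; congr inr; apply: funext => u.
  exact: (h_morph (SK1 t2 u)).
- by rewrite (h_morph SI) ac_bialg.
- rewrite (h_morph (SS1 p)) ac_bialg /=; congr inr; apply: funext => u.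
  exact: (h_morph (SS2 p u)).
- rewrite (h_morph (SS2 p q)) ac_bialg /=; congr inr; apply: funext => u.
  by rewrite (h_morph (Sapp _ _)) /= (h_morph (Sapp p u)) (h_morph (Sapp q u)).
- by rewrite (h_morph (SK1 t2 p)) ac_bialg.
- rewrite (h_morph (Splus p q)) ac_bialg /bialg_rhs /= /gpost.
  by rewrite !Bmap_Bdist !fdist_map_half.
Qed.

Definition skernel : srel := fun t p q => h p = h q.

Lemma bisim_step_skernel t (p q : muS t) :
  Bmap (sid muS) h (gamma p) = Bmap (sid muS) h (gamma q) -> bisim_step skernel p q.
Proof.
case: t p q => [|t1 t2] p q /=; case: (gamma p) => [d1|f1]; case: (gamma q) => [d2|f2] // [E].
- by move=> _ [x ->]; apply: (congr1 (fun P => P [set y | h x = y]) E).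
- by case: f1 {E}; case: f2.
- by move=> _ [x ->]; apply: (congr1 (fun P => P [set y | h x = y]) E).
- by move=> u; apply: (congr1 (fun k => k u) E).
Qed.

Lemma skernel_bisim : prob_app_bisim skernel.
Proof.
split.
  by move=> t; split=> [x|x y|x y w]; [|apply: esym|apply: etrans].
by move=> t p q pq; apply: bisim_step_skernel; rewrite !Bmap_gamma pq.
Qed.

Lemma bialgebra_adequate t (p q : muS t) : h p = h q -> pbisim p q.
Proof. by exists skernel; split; [apply: skernel_bisim|]. Qed.

End Adequacy.

Theorem theorem5p4 :
  exists (Z : sset) (z : smap Z (B Z Z)),
    locally_final z /\
    (forall (Z' : sset) (z' : smap Z' (B Z' Z')),
        locally_final z' -> coalg_iso z z') /\
    (exists a : alg Z,
        is_bialgebra a z /\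
        (forall h : smap muS Z, alg_morph iota a h ->
           forall (t : ty) (p q : muS t), h t p = h t q -> pbisim p q)).
Proof.
exists Z, z; split; first exact: z_locally_final.
split; first by move=> Z' z' z'_lf; apply: locally_final_iso z_locally_final z'_lf.
exists Zalg; split; first exact: Zalg_bialgebra.
move=> h h_morph t p q; exact: (bialgebra_adequate Zalg_bialgebra h_morph).
Qed.
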